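(* Let $(\tilde\Theta^n_I)$ be a congruent family of covariant $n$-tensor fields on $\mathcal M_+(I)$, $I$ ranging over finite sets, such that $(\tilde\Theta^n_I)_{\lambda c_I}=0$ for all finite sets $I$ and all $\lambda>0$. Then $\tilde\Theta^n_I=0$ for all finite sets $I$.
   Context: For a finite set $I$: $\mathcal S(I)=\{\sum_{i\in I}x_i\delta_i:x_i\in\mathbb R\}$, $\mathcal M_+(I)=\{\sum\mu_i\delta_i:\mu_i>0\}$ (tangent space $\mathcal S(I)$), $c_I:=\frac1{|I|}\sum_i\delta_i$. A covariant $n$-tensor field on $\mathcal M_+(I)$ is a continuously varying family of $n$-multilinear forms on $\mathcal S(I)$. A Markov kernel $K:I\to\mathcal P(I')$ between finite sets is a stochastic matrix $K(i)=\sum_{i'}K^i_{i'}\delta_{i'}$ with $K_*(\sum x_i\delta_i)=\sum_{i,i'}K^i_{i'}x_i\delta_{i'}$; it is congruent if there is a map $\kappa:I'\to I$ with $K^i_{i'}=0$ whenever $\kappa(i')\ne i$. The family is congruent if $(\tilde\Theta^n_{I'})_{K_*\mu}(K_*V_1,\dots,K_*V_n)=(\tilde\Theta^n_I)_\mu(V_1,\dots,V_n)$ for every congruent Markov kernel $K:I\to\mathcal P(I')$ between finite sets with $K_*(\mathcal M_+(I))\subset\mathcal M_+(I')$. *)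

From HB Require Import structures.
From mathcomp Require Import all_boot all_order all_algebra.
From mathcomp Require Import reals.
Set Implicit Arguments. Unset Strict Implicit. Unset Printing Implicit Defensive.
Import Order.TTheory GRing.Theory Num.Theory.
Local Open Scope ring_scope.

(* Elements of S(I) (signed finite measures on I) are represented by their
   coefficient functions x : I -> R, i.e. sum_i x_i delta_i. *)

Definition Mpos (R : realType) (I : finType) (mu : I -> R) : Prop :=
  forall i, 0 < mu i.

Definition cI (R : realType) (I : finType) : I -> R :=
  fun _ => (#|I|%:R)^-1.

(* A (candidate) covariant n-tensor field on M_+(I):
   Theta mu (V_0,...,V_{n-1}).  Only its values at mu in M_+(I) matter. *)
Definition tfield (R : realType) (n : nat) (I : finType) : Type :=
  (I -> R) -> ('I_n -> I -> R) -> R.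

Definition upd (R : realType) (n : nat) (I : finType)
  (V : 'I_n -> I -> R) (k : 'I_n) (x : I -> R) : 'I_n -> I -> R :=
  fun j => if j == k then x else V j.

Definition multilinear_at (R : realType) (n : nat) (I : finType)
  (T : tfield R n I) (mu : I -> R) : Prop :=
  forall (V : 'I_n -> I -> R) (k : 'I_n) (a : R) (x y : I -> R),
    T mu (upd V k (fun i => a * x i + y i)) =
    a * T mu (upd V k x) + T mu (upd V k y).

(* continuity in mu on M_+(I) (w.r.t. the max-norm on S(I)); for finite
   dimensional S(I) this is continuity of the family of multilinear forms *)
Definition continuous_field (R : realType) (n : nat) (I : finType)
  (T : tfield R n I) : Prop :=
  forall (V : 'I_n -> I -> R) (mu : I -> R), Mpos mu ->
    forall e : R, 0 < e -> exists2 d : R, 0 < d &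
      forall nu : I -> R, Mpos nu -> (forall i, `|nu i - mu i| < d) ->
        `|T nu V - T mu V| < e.

Definition is_tensor_field (R : realType) (n : nat) (I : finType)
  (T : tfield R n I) : Prop :=
  (forall mu, Mpos mu -> multilinear_at T mu) /\ continuous_field T.

(* Markov kernels K : I -> P(I') given by stochastic matrices K i i' *)
Definition markov_kernel (R : realType) (I I' : finType) (K : I -> I' -> R)
  : Prop :=
  (forall i i', 0 <= K i i') /\ (forall i, \sum_(i' : I') K i i' = 1).

Definition congruent_kernel (R : realType) (I I' : finType) (K : I -> I' -> R)
  : Prop :=
  exists kappa : I' -> I, forall i i', kappa i' != i -> K i i' = 0.

Definition push (R : realType) (I I' : finType) (K : I -> I' -> R)
  (x : I -> R) : I' -> R :=
  fun i' => \sum_(i : I) K i i' * x i.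

Definition tfamily (R : realType) (n : nat) : Type :=
  forall I : finType, tfield R n I.

Definition congruent_family (R : realType) (n : nat) (Th : tfamily R n)
  : Prop :=
  forall (I I' : finType) (K : I -> I' -> R),
    markov_kernel K -> congruent_kernel K ->
    (forall mu : I -> R, Mpos mu -> Mpos (push K mu)) ->
    forall (mu : I -> R), Mpos mu -> forall V : 'I_n -> I -> R,
      Th I' (push K mu) (fun k => push K (V k)) = Th I mu V.

(** Congruence under the kernel that splits each atom [i] of [I] into [k i]
    equal pieces shows that [Theta_I] at a measure with values [c * k i] equals
    [Theta] at a constant measure on the refined set, which is a multiple of
    its uniform measure and hence a zero of [Theta].  Such measures are dense
    in [M_+(I)], so continuity of [Theta_I] forces it to vanish everywhere. *)
From HB Require Import structures.
From mathcomp Require Import all_boot all_order all_algebra.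
From mathcomp Require Import reals.
From Stdlib Require Import FunctionalExtensionality.
Import Order.TTheory GRing.Theory Num.Theory.
Local Open Scope ring_scope.

Section SplitKernel.
Variable R : realType.
Context {I : finType} (k : I -> nat).
Hypothesis k_gt0 : forall i, (0 < k i)%N.

Definition split_set : finType := {i : I & 'I_(k i)}.

Definition split_kernel (i : I) (p : split_set) : R :=
  if tag p == i then ((k i)%:R)^-1 else 0.

Lemma split_kernel_natr_neq0 i : (k i)%:R != 0 :> R.
Proof. by rewrite pnatr_eq0 -lt0n k_gt0. Qed.

Lemma push_split_kernel (x : I -> R) p :
  push split_kernel x p = ((k (tag p))%:R)^-1 * x (tag p).
Proof.
rewrite /push (bigD1 (tag p)) //= big1 ?addr0 /split_kernel ?eqxx //.
by move=> i /negbTE; rewrite eq_sym => ->; rewrite mul0r.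
Qed.

Lemma split_kernel_markov : markov_kernel split_kernel.
Proof.
split=> [i p|i]; first by rewrite /split_kernel; case: ifP; rewrite ?invr_ge0.
rewrite -(sig_big_dep xpredT (fun _ => xpredT)
            (fun j (q : 'I_(k j)) => split_kernel i (Tagged _ q))) /=.
rewrite (bigD1 i) //= [X in _ + X]big1 ?addr0; last first.
  by move=> j /negbTE ji; apply: big1 => q _; rewrite /split_kernel /= ji.
rewrite /split_kernel /= eqxx sumr_const card_ord -[_ *+ _]mulr_natr.
exact: mulVf (split_kernel_natr_neq0 i).
Qed.

Lemma split_kernel_congruent : congruent_kernel split_kernel.
Proof. by exists (fun p => tag p) => i p /negbTE pi; rewrite /split_kernel pi. Qed.

Lemma split_kernel_Mpos (mu : I -> R) : Mpos mu -> Mpos (push split_kernel mu).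
Proof. by move=> mu_gt0 p; rewrite push_split_kernel mulr_gt0 ?invr_gt0 ?ltr0n. Qed.

End SplitKernel.

Lemma natmul_truncnS_approx {R : realType} {c x : R} : 0 < c -> 0 <= x ->
  `|c * (Num.truncn (x / c)).+1%:R - x| <= c.
Proof.
move=> c_gt0 x_ge0.
have lt_trunc : x / c < (Num.truncn (x / c)).+1%:R := truncnS_gt _.
have le_trunc : (Num.truncn (x / c))%:R <= x / c.
  by rewrite truncn_le divr_ge0 // ltW.
rewrite ltr_pdivrMr // mulrC in lt_trunc.
rewrite ler_pdivlMr // mulrC in le_trunc.
rewrite ger0_norm; last by rewrite subr_ge0 ltW.
by rewrite lerBlDr -natr1 mulrDr mulr1 addrC lerD2l.
Qed.

Section VanishingAtUniform.
Context {R : realType} {n : nat} {Th : tfamily R n}.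
Hypothesis Hcong : congruent_family Th.
Hypothesis Hzero : forall (I : finType) (lam : R), 0 < lam ->
  forall V : 'I_n -> I -> R, Th I (fun i => lam * @cI R I i) V = 0.

Lemma tfamily_const_eq0 (I : finType) (c : R) V :
  0 < c -> Th I (fun _ => c) V = 0.
Proof.
move=> c_gt0; case: (posnP #|I|) => [/card0_eq I0|I_gt0].
  have -> : (fun _ : I => c) = (fun i => 1 * @cI R I i).
    by apply: functional_extensionality => i; move: (I0 i); rewrite inE.
  exact: Hzero.
have -> : (fun _ : I => c) = (fun i => (c * #|I|%:R) * @cI R I i).
  apply: functional_extensionality => i.
  by rewrite /cI -mulrA mulfV ?mulr1 // pnatr_eq0 -lt0n.
by apply: Hzero; rewrite mulr_gt0 // ltr0n.
Qed.

Lemma tfamily_natmul_eq0 (I : finType) (c : R) (k : I -> nat) V :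
  0 < c -> (forall i, (0 < k i)%N) -> Th I (fun i => c * (k i)%:R) V = 0.
Proof.
move=> c_gt0 k_gt0.
have mu_gt0 : Mpos (fun i => c * (k i)%:R) by move=> i; rewrite mulr_gt0 ?ltr0n.
rewrite -(Hcong _ _ _ (split_kernel_markov R k k_gt0) (split_kernel_congruent R k)
            (split_kernel_Mpos R k k_gt0) _ mu_gt0 V).
have -> : push (split_kernel R k) (fun i => c * (k i)%:R) = (fun _ => c).
  apply: functional_extensionality => p.
  by rewrite push_split_kernel mulrCA mulVf ?mulr1 ?split_kernel_natr_neq0.
exact: tfamily_const_eq0.
Qed.

End VanishingAtUniform.

Theorem lemma4p8 (R : realType) (n : nat) (Th : tfamily R n)
  (Hfield : forall I : finType, is_tensor_field (Th I))
  (Hcong : congruent_family Th)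
  (Hzero : forall (I : finType) (lam : R), 0 < lam ->
     forall V : 'I_n -> I -> R, Th I (fun i => lam * @cI R I i) V = 0) :
  forall (I : finType) (mu : I -> R), Mpos mu ->
    forall V : 'I_n -> I -> R, Th I mu V = 0.
Proof.
move=> I mu mu_gt0 V; apply/eqP/contraT; rewrite -normr_gt0 => Th_norm_gt0.
have [_ Th_cont] := Hfield I.
have [d d_gt0 near_mu] := Th_cont V mu mu_gt0 _ Th_norm_gt0.
have c_gt0 : 0 < d / 2 by rewrite divr_gt0.
pose k i := (Num.truncn (mu i / (d / 2))).+1.
have nu_gt0 : Mpos (fun i => d / 2 * (k i)%:R) by move=> i; rewrite mulr_gt0 ?ltr0n.
have nu_near i : `|d / 2 * (k i)%:R - mu i| < d.
  apply: le_lt_trans (natmul_truncnS_approx c_gt0 (ltW (mu_gt0 i))) _.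
  by rewrite ltr_pdivrMr // ltr_pMr // ltr1n.
have := near_mu _ nu_gt0 nu_near.
by rewrite (tfamily_natmul_eq0 Hcong Hzero _ _ _ V c_gt0) // sub0r normrN ltxx.
Qed.
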